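(* Let $S$ be a profinite group with $H^2(S)=0$ and $S^{[2]}\cong(\mathbb{Z}/q)^I$ for some set $I$. Then there is an exact sequence \[0\to H^2(S^{[2]})_{\mathrm{dec}}\hookrightarrow H^2(S^{[2]})\xrightarrow{\prod_C\delta\,\mathrm{res}_C}\prod_C H^2(C),\] where $C$ ranges over all cyclic subgroups of $S^{[2]}$ of order $q$.
   Context: $p$ prime, $q=p^s$; $H^i(\cdot)=H^i(\cdot,\mathbb{Z}/q)$ with trivial action; $S^{(2)}=S^q[S,S]$, $S^{[2]}=S/S^{(2)}$; $H^2(\cdot)_{\mathrm{dec}}$ is the image of the cup product $H^1\otimes H^1\to H^2$; $\delta=1$ if $p>2$, $\delta=2$ if $p=2$; $\mathrm{res}_C$ is restriction to the subgroup $C$. *)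

From HB Require Import structures.
From mathcomp Require Import all_boot all_algebra.
From mathcomp Require Import boolp classical_sets topology.
From Stdlib Require List.
Set Implicit Arguments. Unset Strict Implicit. Unset Printing Implicit Defensive.
Import GRing.Theory.
Local Open Scope ring_scope.
Local Open Scope classical_set_scope.

Definition is_group {T : Type} (mul : T -> T -> T) (inv : T -> T) (one : T) :=
  [/\ forall x y z, mul x (mul y z) = mul (mul x y) z,
      forall x, mul one x = x & forall x, mul (inv x) x = one].

Definition is_profinite_group (T : topologicalType)
    (mul : T -> T -> T) (inv : T -> T) (one : T) :=
  [/\ is_group mul inv one,
      continuous (fun pq : T * T => mul pq.1 pq.2),
      continuous inv,
      compact [set: T] &
      hausdorff_space T /\ totally_disconnected [set: T]].

Definition gpow {T : Type} (mul : T -> T -> T) (one : T) (x : T) (n : nat) : T :=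
  iter n (mul x) one.
Definition gcomm {T : Type} (mul : T -> T -> T) (inv : T -> T) (x y : T) : T :=
  mul (mul (inv x) (inv y)) (mul x y).

Definition is_subgroup {T : Type} (mul : T -> T -> T) (inv : T -> T) (one : T)
    (H : set T) :=
  [/\ H one, forall x y, H x -> H y -> H (mul x y) & forall x, H x -> H (inv x)].

Definition gen_subgroup {T : Type} (mul : T -> T -> T) (inv : T -> T) (one : T)
    (A : set T) : set T :=
  \bigcap_(H in [set H | is_subgroup mul inv one H /\ A `<=` H]) H.

Definition S2 (T : topologicalType) (mul : T -> T -> T) (inv : T -> T) (one : T)
    (q : nat) : set T :=
  closure (gen_subgroup mul inv one
    [set y | (exists x, y = gpow mul one x q) \/ (exists x z, y = gcomm mul inv x z)]).

(* continuity into a discrete space = all fibres are open *)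
Definition cont1 (T : topologicalType) (A : Type) (f : T -> A) :=
  forall a, open (f @^-1` [set a]).
Definition cont2 (T : topologicalType) (A : Type) (f : T -> T -> A) :=
  forall a, open ((fun pq : T * T => f pq.1 pq.2) @^-1` [set a]).

(* inhomogeneous 2-cocycles / 2-coboundaries, trivial action *)
Definition cocycle2 {G : Type} (add : G -> G -> G) {M : zmodType} (f : G -> G -> M) :=
  forall x y z, f y z - f (add x y) z + f x (add y z) - f x y = 0.
Definition is_cobound2 {G : Type} (add : G -> G -> G) {M : zmodType}
    (f : G -> G -> M) (b : G -> M) :=
  forall x y, f x y = b x + b y - b (add x y).

Definition H2_vanishes (T : topologicalType) (mul : T -> T -> T) (q : nat) :=
  forall f : T -> T -> 'Z_q, cont2 f -> cocycle2 mul f ->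
    exists b : T -> 'Z_q, cont1 b /\ is_cobound2 mul f b.

Definition gadd (I : Type) (q : nat) (x y : I -> 'Z_q) : I -> 'Z_q :=
  fun i => x i + y i.
Definition gzero (I : Type) (q : nat) : I -> 'Z_q := fun _ => 0.
Definition gscale (I : Type) (q : nat) (g : I -> 'Z_q) (k : nat) : I -> 'Z_q :=
  fun i => g i *+ k.

(* continuity into discrete Z/q for the product topology on (Z/q)^I
   (discrete factors): locally the value depends on finitely many coordinates *)
Definition contG1 (I : Type) (q : nat) (f : (I -> 'Z_q) -> 'Z_q) :=
  forall x, exists J : seq I, forall x',
    (forall i, List.In i J -> x' i = x i) -> f x' = f x.
Definition contG2 (I : Type) (q : nat) (f : (I -> 'Z_q) -> (I -> 'Z_q) -> 'Z_q) :=
  forall x y, exists J : seq I, forall x' y',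
    (forall i, List.In i J -> x' i = x i /\ y' i = y i) -> f x' y' = f x y.

(* continuous homomorphisms (Z/q)^I -> Z/q, i.e. elements of H^1 *)
Definition homG1 (I : Type) (q : nat) (f : (I -> 'Z_q) -> 'Z_q) :=
  contG1 f /\ forall x y, f (gadd x y) = f x + f y.

(* pi : S -> (Z/q)^I realises S^[2] = S/S^(2) ~= (Z/q)^I :
   a continuous surjective homomorphism with kernel S^(2) *)
Definition S2_quotient_map (T : topologicalType) (mul : T -> T -> T) (inv : T -> T)
    (one : T) (I : Type) (q : nat) (pi : T -> I -> 'Z_q) :=
  [/\ forall x y, pi (mul x y) = gadd (pi x) (pi y),
      forall i (a : 'Z_q), open [set x | pi x i = a],
      forall y, exists x, pi x = y
    & [set x | pi x = @gzero I q] = S2 mul inv one q].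

Definition order_q (I : Type) (q : nat) (g : I -> 'Z_q) :=
  gscale g q = @gzero I q /\ forall k, (0 < k < q)%N -> gscale g k <> @gzero I q.

(* the class of f restricted to C = <g> is zero in H^2(C, Z/q) *)
Definition res_cyc_zero (I : Type) (q : nat) (g : I -> 'Z_q)
    (f : (I -> 'Z_q) -> (I -> 'Z_q) -> 'Z_q) :=
  exists b : (I -> 'Z_q) -> 'Z_q, forall a c : nat,
    f (gscale g a) (gscale g c) = b (gscale g a) + b (gscale g c) - b (gscale g (a + c)).

(* the class of f lies in H^2_dec: it is a sum of cup products chi cup psi of
   elements of H^1, (chi cup psi)(x,y) = chi(x) psi(y), up to a continuous coboundary *)
Definition decomposable (I : Type) (q : nat) (f : (I -> 'Z_q) -> (I -> 'Z_q) -> 'Z_q) :=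
  exists (cs : seq (((I -> 'Z_q) -> 'Z_q) * ((I -> 'Z_q) -> 'Z_q)))
         (b : (I -> 'Z_q) -> 'Z_q),
    [/\ forall c, List.In c cs -> homG1 c.1 /\ homG1 c.2,
        contG1 b
      & forall x y, f x y = \sum_(c <- cs) c.1 x * c.2 y + (b x + b y - b (gadd x y))].

Definition delta (p : nat) : nat := if p == 2%N then 2%N else 1%N.

From HB Require Import structures.
From mathcomp Require Import all_boot all_algebra.
From mathcomp Require Import boolp classical_sets functions topology.
From mathcomp Require Import ring.
From Stdlib Require List.
Import GRing.Theory.
Local Open Scope ring_scope.
Set Implicit Arguments. Unset Strict Implicit. Unset Printing Implicit Defensive.

(* Let f be a continuous 2-cocycle on A = (Z/q)^I.  Its alternating part
   f(x,y) - f(y,x) is biadditive and depends on finitely many coordinates, so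
   it is the alternation of a finite sum g of cup products of coordinate
   characters; f - g is then symmetric.  A symmetric normalized cocycle h
   defines an abelian extension of A by Z/q, and when h vanishes near 0 this
   extension splits continuously as soon as (0, e_j)^q = 1 for the finitely
   many relevant unit vectors e_j, i.e. as soon as the traces
   sum_(a < q) h(a e_j, e_j) vanish.  The trace of a coboundary on a cyclic
   group of order q is 0 and that of the cup product x_j y_j is C(q,2), while
   multiplication by delta kills exactly the multiples of C(q,2) in Z/q; so
   subtracting diagonal cup products reaches zero traces whenever the
   restrictions of delta f to cyclic subgroups are coboundaries.  Conversely
   a cup product restricted to <g> is (a, c) |-> u a c, and delta u a c is the
   coboundary of a |-> - u (delta / 2) a^2. *)

Section AdditiveMaps.
Variables (A : zmodType) (M : comNzRingType).

Definition biadditive (B : A -> A -> M) :=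
  (forall y, {morph B^~ y : x x' / x + x'}) /\ (forall x, {morph B x : y y' / y + y'}).

Lemma addmorph0 (F : A -> M) : {morph F : x y / x + y} -> F 0 = 0.
Proof. by move=> FD; apply: (addrI (F 0)); rewrite -FD !addr0. Qed.

Lemma addmorphMn (F : A -> M) : {morph F : x y / x + y} ->
  forall x n, F (x *+ n) = F x *+ n.
Proof.
move=> FD x; elim=> [|n IHn]; first by rewrite !mulr0n (addmorph0 FD).
by rewrite !mulrS FD IHn.
Qed.

Lemma cocycle2B (f g : A -> A -> M) : cocycle2 +%R f -> cocycle2 +%R g ->
  cocycle2 +%R (fun x y => f x y - g x y).
Proof.
move=> fc gc x y z; rewrite -[RHS](subrr 0) -{1}(fc x y z) -(gc x y z); ring.
Qed.

Lemma cocycle2_const (c : M) : cocycle2 +%R (fun _ _ : A => c).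
Proof. by move=> x y z; rewrite subrr add0r subrr. Qed.

Lemma biadditive_cocycle2 B : biadditive B -> cocycle2 +%R B.
Proof. by case=> Bl Br x y z; rewrite Bl Br; ring. Qed.

Lemma biadditive0l B y : biadditive B -> B 0 y = 0.
Proof. by case=> Bl _; apply: addmorph0 (Bl y). Qed.

Lemma biadditiveMnl B : biadditive B -> forall x y n, B (x *+ n) y = B x y *+ n.
Proof. by case=> Bl _ x y; apply: (addmorphMn (Bl y)). Qed.

Lemma biadditiveMnr B : biadditive B -> forall x y n, B x (y *+ n) = B x y *+ n.
Proof. by case=> _ Br x y; apply: (addmorphMn (Br x)). Qed.

End AdditiveMaps.

Section CommutatorForm.
Variables (A : zmodType) (R : comNzRingType) (f : A -> A -> R).
Hypothesis f_cocycle : cocycle2 +%R f.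

Definition comm_form x y := f x y - f y x.

Lemma comm_formN x y : comm_form y x = - comm_form x y.
Proof. by rewrite /comm_form opprB. Qed.

Lemma comm_form_xx x : comm_form x x = 0.
Proof. exact: subrr. Qed.

Lemma comm_form_biadditive : biadditive comm_form.
Proof.
have addl z : {morph comm_form^~ z : x y / x + y}.
  move=> x y; rewrite /comm_form.
  have := f_cocycle x y z; have := f_cocycle z x y; have := f_cocycle x z y.
  rewrite [z + x]addrC [z + y]addrC => E1 E2 E3.
  (* the difference of the two sides is E1 - E2 - E3 *)
  by rewrite -[LHS]subr0 -{1}(subr0 0) -{1}(subr0 0) -{1}E1 -{1}E2 -E3; ring.
split=> // x y z.
by rewrite comm_formN addl opprD -!comm_formN.
Qed.

End CommutatorForm.

Section CentralExtension.
Variables (A : zmodType) (R : comNzRingType) (h : A -> A -> R).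
Hypotheses (h_cocycle : cocycle2 +%R h) (h_sym : forall x y, h x y = h y x).
Hypothesis h00 : h 0 0 = 0.

(* The group law of the abelian extension of [A] by [R] classified by [h]. *)
Definition ext_mul (a b : R * A) : R * A := (a.1 + b.1 + h a.2 b.2, a.2 + b.2).
Definition ext_one : R * A := (0, 0).

Lemma ext_mulA a b c : ext_mul a (ext_mul b c) = ext_mul (ext_mul a b) c.
Proof.
rewrite /ext_mul /=; congr (_, _); last exact: addrA.
by rewrite -[LHS]subr0 -(h_cocycle a.2 b.2 c.2); ring.
Qed.

Lemma ext_mulC a b : ext_mul a b = ext_mul b a.
Proof. by rewrite /ext_mul h_sym [b.2 + _]addrC; congr (_, _); ring. Qed.

Lemma ext_mul1 a : ext_mul ext_one a = a.
Proof.
have h0y y : h 0 y = 0 by rewrite -h00 -[RHS]addr0 -(h_cocycle 0 0 y) !add0r; ring.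
by case: a => r x; rewrite /ext_mul /= h0y !add0r addr0.
Qed.

Lemma ext_mulACA a b c e :
  ext_mul (ext_mul a b) (ext_mul c e) = ext_mul (ext_mul a c) (ext_mul b e).
Proof. by rewrite -!ext_mulA (ext_mulA b c) (ext_mulC b c) -ext_mulA. Qed.

(* [ext_pow x n] is the [n]-th power of [(0, x)]. *)
Definition ext_pow (x : A) (n : nat) : R * A := (\sum_(a < n) h (x *+ a) x, x *+ n).

Lemma ext_pow0 x : ext_pow x 0 = ext_one.
Proof. by rewrite /ext_pow big_ord0 mulr0n. Qed.

Lemma ext_powS x n : ext_pow x n.+1 = ext_mul (ext_pow x n) (0, x).
Proof. by rewrite /ext_pow /ext_mul /= big_ord_recr /= addr0 mulrSr. Qed.

Lemma ext_powD x n m : ext_pow x (n + m) = ext_mul (ext_pow x n) (ext_pow x m).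
Proof.
elim: m => [|m IHm]; first by rewrite addn0 ext_pow0 ext_mulC ext_mul1.
by rewrite addnS !ext_powS IHm ext_mulA.
Qed.

End CentralExtension.

Arguments ext_one {A R}.

Section CyclicTrace.
Variables (A : zmodType) (R : comNzRingType) (q : nat).

Definition cyc_trace (f : A -> A -> R) (g : A) := \sum_(a < q) f (g *+ a) g.

Lemma cyc_traceB f f' g :
  cyc_trace (fun x y => f x y - f' x y) g = cyc_trace f g - cyc_trace f' g.
Proof. exact: sumrB. Qed.

Lemma cyc_trace_const (c : R) g : cyc_trace (fun _ _ => c) g = c *+ q.
Proof. by rewrite /cyc_trace sumr_const card_ord. Qed.

Lemma cyc_trace_biadditive B g : biadditive B -> cyc_trace B g = B g g *+ 'C(q, 2).
Proof.
case=> Bl _; rewrite /cyc_trace -bin2_sum big_mkord -sumrMnr.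
by apply: eq_bigr => a _; rewrite (addmorphMn (Bl g)).
Qed.

Lemma cyc_trace_cobound f g (b : A -> R) : g *+ q = 0 ->
  (forall a c : nat, f (g *+ a) (g *+ c) = b (g *+ a) + b (g *+ c) - b (g *+ (a + c))) ->
  cyc_trace f g = b g *+ q.
Proof.
move=> gq fb; rewrite /cyc_trace.
rewrite (eq_bigr (fun a : 'I_q => b g + (- b (g *+ a.+1) - - b (g *+ a)))); last first.
  by move=> a _; rewrite -{2}[g]mulr1n fb mulr1n addn1; ring.
rewrite big_split sumr_const card_ord /=.
rewrite -(big_mkord xpredT (fun a => - b (g *+ a.+1) - - b (g *+ a))).
by rewrite telescope_sumr // gq mulr0n subrr addr0.
Qed.

End CyclicTrace.

Section Coordinates.
Variables (I : Type) (q : nat).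
Local Notation R := 'Z_q.
Local Notation A := (I -> 'Z_q).

Lemma gaddE (x y : A) : gadd x y = x + y.
Proof. by []. Qed.

Lemma gscaleE (x : A) n : gscale x n = x *+ n.
Proof. by rewrite natmulfctE. Qed.

Definition unitv (j : I) : A := fun i => if `[< i = j >] then 1 else 0.
Definition cut (j : I) (x : A) : A := fun i => if `[< i = j >] then 0 else x i.
Definition proj (L : seq I) (x : A) : A :=
  fun i => if `[< List.In i L >] then x i else 0.

Definition vanish_on (L : seq I) (u : A) := forall i, List.In i L -> u i = 0.
Definition agree_on (L : seq I) (x y : A) := forall i, List.In i L -> x i = y i.
Definition local_on (L : seq I) (F : A -> R) := forall x y, agree_on L x y -> F x = F y.

Lemma agree_on_incl L L' x y : List.incl L L' -> agree_on L' x y -> agree_on L x y.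
Proof. by move=> LL' xy i /LL'; apply: xy. Qed.

Lemma agree_on_catl L L' x y : agree_on (L ++ L') x y -> agree_on L x y.
Proof. by apply: agree_on_incl; apply/List.incl_appl/List.incl_refl. Qed.

Lemma agree_on_catr L L' x y : agree_on (L ++ L') x y -> agree_on L' x y.
Proof. by apply: agree_on_incl; apply/List.incl_appr/List.incl_refl. Qed.

Lemma vanish_on_catl L L' u : vanish_on (L ++ L') u -> vanish_on L u.
Proof. exact: agree_on_catl. Qed.

Lemma vanish_on_catr L L' u : vanish_on (L ++ L') u -> vanish_on L' u.
Proof. exact: agree_on_catr. Qed.

Lemma contG2_agree (f : A -> A -> R) x y : contG2 f ->
  exists J, forall x' y', agree_on J x' x -> agree_on J y' y -> f x' y' = f x y.
Proof.
by move=> /(_ x y)[J fJ]; exists J => x' y' xx' yy'; apply: fJ => i iJ; rewrite xx' ?yy'.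
Qed.

Lemma cutD j : {morph cut j : x y / x + y}.
Proof.
by move=> x y; apply/funext => i; rewrite /cut !addrfctE /=; case: asboolP; rewrite ?addr0.
Qed.

Lemma projD L : {morph proj L : x y / x + y}.
Proof.
by move=> x y; apply/funext => i; rewrite /proj !addrfctE /=; case: asboolP; rewrite ?addr0.
Qed.

Lemma proj_nil x : proj [::] x = 0.
Proof. by apply/funext => i; rewrite /proj; case: asboolP. Qed.

Lemma proj_cons j L x : proj (j :: L) x = unitv j *+ x j + proj L (cut j x).
Proof.
apply/funext => i; rewrite addrfctE natmulfctE /proj /unitv /cut /=.
case: (pselect (i = j)) => [->|ji].
  rewrite (asboolT (erefl j)) (asboolT (or_introl erefl : List.In j (j :: L))).
  by rewrite if_same addr0 natr_Zp.
rewrite (asboolF ji) mul0rn add0r; congr (if `[< _ >] then _ else _).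
by apply/propext; split=> [[/esym|]|] //; right.
Qed.

Lemma proj_agree L x y : agree_on L x y -> proj L x = proj L y.
Proof. by move=> xy; apply/funext => i; rewrite /proj; case: asboolP => // /xy. Qed.

Lemma vanish_on_subproj L x : vanish_on L (x - proj L x).
Proof. by move=> i iL; rewrite addrfctE opprfctE /proj /= asboolT // subrr. Qed.

Lemma agree_on_cut j L x y : agree_on (j :: L) x y -> agree_on L (cut j x) (cut j y).
Proof. by move=> xy i iL; rewrite /cut; case: asboolP => // _; apply: xy; right. Qed.

Lemma cut_unitv j : cut j (unitv j) = 0.
Proof. by apply/funext => i; rewrite /cut /unitv; case: asboolP. Qed.

Lemma cut_unitv_neq j j' : j' <> j -> cut j' (unitv j) = unitv j.
Proof.
move=> jj'; apply/funext => i; rewrite /cut /unitv.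
by case: asboolP => // ->; case: asboolP.
Qed.

Lemma unitv_char j : (1 < q)%N -> unitv j *+ q = 0.
Proof.
by move=> q1; rewrite natmulfctE; apply/funext => i; rewrite -mulr_natr pchar_Zp ?mulr0.
Qed.

End Coordinates.

Arguments unitv {I q} j _.

Section CupSums.
Variables (I : Type) (q : nat).
Local Notation R := 'Z_q.
Local Notation A := (I -> 'Z_q).
Local Notation cup := (seq ((A -> R) * (A -> R))).

Definition cup_sum (cs : cup) (x y : A) : R := \sum_(c <- cs) c.1 x * c.2 y.

Definition hom_on (L : seq I) (F : A -> R) := {morph F : x y / x + y} /\ local_on L F.
Definition cups_on (L : seq I) (cs : cup) :=
  forall c, List.In c cs -> hom_on L c.1 /\ hom_on L c.2.

Lemma hom_on_homG1 L F : hom_on L F -> homG1 F.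
Proof. by case=> FD FL; split=> // x; exists L => x' xx'; apply: FL => i /xx'. Qed.

Lemma hom_on_coord L j : List.In j L -> hom_on L (fun y => y j).
Proof. by move=> jL; split=> [x y|x y /(_ j jL)]. Qed.

Lemma cups_on_cons L c cs : cups_on L (c :: cs) ->
  [/\ hom_on L c.1, hom_on L c.2 & cups_on L cs].
Proof.
by move=> ccs; have [] := ccs c (or_introl erefl); split=> // c' c'cs; apply: ccs; right.
Qed.

Definition cups_additive (cs : cup) := forall c, List.In c cs ->
  {morph c.1 : x y / x + y} /\ {morph c.2 : x y / x + y}.

Lemma cups_on_additive L cs : cups_on L cs -> cups_additive cs.
Proof. by move=> csL c /csL[[c1D _] [c2D _]]. Qed.

Lemma cup_sum_biadditive cs : cups_additive cs -> biadditive (cup_sum cs).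
Proof.
elim: cs => [|c cs IHcs] csD.
  by split=> ? ? ?; rewrite /cup_sum !big_nil addr0.
have [c1D c2D] := csD c (or_introl erefl).
have [csDl csDr] : biadditive (cup_sum cs) by apply: IHcs => c' c'cs; apply: csD; right.
by split=> x y z; rewrite /cup_sum !big_cons -!/(cup_sum _ _ _) ?csDl ?csDr ?c1D ?c2D; ring.
Qed.

Lemma cup_sum_cons c cs x y : cup_sum (c :: cs) x y = c.1 x * c.2 y + cup_sum cs x y.
Proof. exact: big_cons. Qed.

Lemma cup_sum_local L cs x x' y y' : cups_on L cs ->
  agree_on L x x' -> agree_on L y y' -> cup_sum cs x y = cup_sum cs x' y'.
Proof.
move=> + xx' yy'; elim: cs => [|c cs IHcs] csL; first by rewrite /cup_sum !big_nil.
have [[_ c1L] [_ c2L] /IHcs csE] := cups_on_cons csL.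
by rewrite !cup_sum_cons csE (c1L _ _ xx') (c2L _ _ yy').
Qed.

Lemma cup_sum_vanish L cs u y : cups_on L cs -> vanish_on L u -> cup_sum cs u y = 0.
Proof.
move=> csL u0; rewrite (cup_sum_local csL u0 (y' := y)) //.
exact: biadditive0l (cup_sum_biadditive (cups_on_additive csL)).
Qed.

Lemma cup_sum_cont L cs : cups_on L cs -> contG2 (cup_sum cs).
Proof.
move=> csL x y; exists L => x' y' xy.
by apply: cup_sum_local csL _ _ => i /xy[].
Qed.

Lemma contG2B (f g : A -> A -> R) : contG2 f -> contG2 g ->
  contG2 (fun x y => f x y - g x y).
Proof.
move=> fC gC x y; have [J fJ] := fC x y; have [K gK] := gC x y.
exists (J ++ K) => x' y' xy; congr (_ - _).
  by apply: fJ => i iJ; apply/xy/List.in_or_app; left.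
by apply: gK => i iK; apply/xy/List.in_or_app; right.
Qed.

Definition cut_cups (j : I) (cs : cup) : cup :=
  map (fun c => (c.1 \o cut j, c.2 \o cut j)) cs.

Lemma cup_sum_cut_cups j cs x y :
  cup_sum (cut_cups j cs) x y = cup_sum cs (cut j x) (cut j y).
Proof. by rewrite /cup_sum big_map. Qed.

Lemma hom_on_cut L j F : hom_on L F -> hom_on (j :: L) (F \o cut j).
Proof.
case=> FD FL; split=> x y /=; first by rewrite cutD FD.
by move=> xy; apply/FL/agree_on_cut.
Qed.

Lemma cups_on_cut_cups L j cs : cups_on L cs -> cups_on (j :: L) (cut_cups j cs).
Proof.
move=> csL c /List.in_map_iff[c' [<- /csL[c'1 c'2]]].
by split; apply: hom_on_cut.
Qed.

(* Cutting out coordinate [j] from the later terms makes repetitions in [L]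
   harmless. *)
Fixpoint cup_rec (phi : I -> seq I -> A -> R) (L : seq I) : cup :=
  if L is j :: L' then (phi j L', fun y => y j) :: cut_cups j (cup_rec phi L')
  else [::].

Lemma cups_on_cup_rec phi L : (forall j L', hom_on (j :: L') (phi j L')) ->
  cups_on L (cup_rec phi L).
Proof.
move=> phiL; elim: L => [|j L IHL] c //= [<-|]; last exact: cups_on_cut_cups.
by split=> //; apply: hom_on_coord; left.
Qed.

Lemma cup_sum_rec_cons phi j L x y : cup_sum (cup_rec phi (j :: L)) x y =
  phi j L x * y j + cup_sum (cup_rec phi L) (cut j x) (cut j y).
Proof. by rewrite cup_sum_cons cup_sum_cut_cups. Qed.

Lemma decomposableD (f g : A -> A -> R) : decomposable f -> decomposable g ->
  decomposable (fun x y => f x y + g x y).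
Proof.
move=> [cs [b [csH bC fE]]] [ds [c [dsH cC gE]]].
exists (cs ++ ds), (fun x => b x + c x); split.
- by move=> e /(List.in_app_or cs ds e)[/csH|/dsH].
- move=> x; have [J bJ] := bC x; have [K cK] := cC x.
  exists (J ++ K) => x' xx'.
  by rewrite (bJ x') ?(cK x') // => i ?; apply/xx'/List.in_or_app; [right|left].
- by move=> x y; rewrite fE gE big_cat /=; ring.
Qed.

Lemma decomposable_cups L cs : cups_on L cs -> decomposable (cup_sum cs).
Proof.
move=> csL; exists cs, (fun _ => 0); split.
- by move=> c /csL[/hom_on_homG1 ? /hom_on_homG1 ?].
- by move=> x; exists [::].
- by move=> x y /=; rewrite addr0 subrr addr0.
Qed.

Lemma decomposable_eq (f g : A -> A -> R) :
  (forall x y, f x y = g x y) -> decomposable g -> decomposable f.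
Proof. by move=> fg; have -> : f = g by apply/funext => x; apply/funext. Qed.

Lemma decomposable_cobound (b : A -> R) : contG1 b ->
  decomposable (fun x y => b x + b y - b (x + y)).
Proof. by move=> bC; exists [::], b; split=> // x y; rewrite big_nil add0r. Qed.

Lemma decomposable_const (c : R) : decomposable (fun _ _ : A => c).
Proof.
apply: decomposable_eq (decomposable_cobound (b := fun _ => c) _) => [x y|x].
  by rewrite addrK.
by exists [::].
Qed.

End CupSums.

Arguments decomposable_const {I q} c.

Section AlternatingPart.
Variables (I : Type) (q : nat).
Local Notation R := 'Z_q.
Local Notation A := (I -> 'Z_q).

Lemma biadditive_local (B : A -> A -> R) : biadditive B ->
  (exists J, forall u u', vanish_on J u -> vanish_on J u' -> B u u' = 0) ->
  (forall j, exists K, forall u, vanish_on K u -> B u (unitv j) = 0) ->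
  exists L, forall u, vanish_on L u -> forall y, B u y = 0.
Proof.
move=> [_ Br] [J BJ] BK; pose K j := sval (cid (BK j)).
exists (J ++ List.flat_map K J) => u u0 y.
have Bu_proj L y' : List.incl L J -> B u (proj L y') = 0.
  elim: L y' => [|j L IHL] y' LJ; first by rewrite proj_nil (addmorph0 (Br u)).
  have [jJ {}LJ] := List.incl_cons_inv LJ; rewrite proj_cons Br (addmorphMn (Br u)) IHL // addr0.
  rewrite (svalP (cid (BK j)) u) ?mul0rn // => i iK.
  by apply/u0/List.in_or_app; right; apply/List.in_flat_map; exists j.
rewrite -(subrKC (proj J y) y) Br Bu_proj ?add0r; last exact: List.incl_refl.
by apply: BJ (vanish_on_catl u0) _; apply: vanish_on_subproj.
Qed.

Section UpperCups.
Variable B : A -> A -> R.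
Hypotheses (B_biadditive : biadditive B) (B_alt : forall x, B x x = 0).

Lemma alt_skew x y : B y x = - B x y.
Proof.
have [Bl Br] := B_biadditive; apply/eqP; rewrite -subr_eq0 opprK.
by have := B_alt (x + y); rewrite Bl !Br !B_alt add0r addr0 addrC => ->.
Qed.

(* The upper-triangular half of [B] in the coordinates [L]. *)
Definition upper_cups (L : seq I) :=
  cup_rec (fun j L' x => B (proj L' (cut j x)) (unitv j)) L.

Lemma cups_on_upper_cups L : cups_on L (upper_cups L).
Proof.
apply: cups_on_cup_rec => j L'; have [Bl _] := B_biadditive.
split=> [x y|x y xy]; first by rewrite cutD projD Bl.
by rewrite (proj_agree (agree_on_cut xy)).
Qed.

Lemma upper_cups_skew L x y :
  cup_sum (upper_cups L) x y - cup_sum (upper_cups L) y x = B (proj L x) (proj L y).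
Proof.
have [Bl Br] := B_biadditive.
elim: L x y => [|j L IHL] x y.
  by rewrite /cup_sum !big_nil proj_nil subrr (addmorph0 (Bl _)).
rewrite !cup_sum_rec_cons !proj_cons Bl !Br -IHL -/(upper_cups L).
set e := unitv j; set x' := proj L (cut j x); set y' := proj L (cut j y).
rewrite (biadditiveMnl B_biadditive e (e *+ y j) (x j)).
rewrite (biadditiveMnl B_biadditive e y' (x j)).
rewrite (biadditiveMnr B_biadditive e e (y j)) (biadditiveMnr B_biadditive x' e (y j)).
rewrite B_alt (alt_skew y') -(mulr_natr (- B y' e)) -(mulr_natr (B x' e)) !natr_Zp.
by rewrite mul0rn; ring.
Qed.

End UpperCups.

Section SymmetrizingCups.
Variable f : A -> A -> R.
Hypotheses (f_cont : contG2 f) (f_cocycle : cocycle2 +%R f).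

Lemma comm_form_local :
  exists L, forall u, vanish_on L u -> forall y, comm_form f u y = 0.
Proof.
apply: biadditive_local (comm_form_biadditive f_cocycle) _ _.
  have [J fJ] := contG2_agree 0 0 f_cont; exists J => u u' u0 u'0.
  by rewrite /comm_form (fJ u u' u0 u'0) (fJ u' u u'0 u0) subrr.
move=> j; have [K1 fK1] := contG2_agree 0 (unitv j) f_cont.
have [K2 fK2] := contG2_agree (unitv j) 0 f_cont.
exists (K1 ++ K2) => u u0.
rewrite /comm_form (fK1 _ _ (vanish_on_catl u0) (fun _ _ => erefl)).
rewrite (fK2 _ _ (fun _ _ => erefl) (vanish_on_catr u0)).
exact: biadditive0l (comm_form_biadditive f_cocycle).
Qed.

Lemma symmetrizing_cups : exists L cs,
  cups_on L cs /\ forall x y, f x y - cup_sum cs x y = f y x - cup_sum cs y x.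
Proof.
have [L fL] := comm_form_local.
have [Bl Br] := comm_form_biadditive f_cocycle.
have B_proj x y : comm_form f x y = comm_form f (proj L x) (proj L y).
  rewrite -{1}(subrKC (proj L x) x) Bl (fL (x - proj L x)) ?addr0; last exact: vanish_on_subproj.
  rewrite -{1}(subrKC (proj L y) y) Br (comm_formN f (y - proj L y)).
  by rewrite (fL (y - proj L y)) ?oppr0 ?addr0 //; apply: vanish_on_subproj.
exists L, (upper_cups (comm_form f) L); split; first exact: cups_on_upper_cups.
move=> x y; have := upper_cups_skew (comm_form_biadditive f_cocycle) (comm_form_xx f) L x y.
by rewrite -B_proj => E; rewrite -[f x y](subrK (f y x)) -[f x y - _]E; ring.
Qed.

End SymmetrizingCups.

End AlternatingPart.

Section SymmetricCocycles.
Variables (I : Type) (q : nat).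
Hypothesis q_gt1 : (1 < q)%N.
Local Notation R := 'Z_q.
Local Notation A := (I -> 'Z_q).
Variables (h : A -> A -> R) (J : seq I).
Hypotheses (h_cocycle : cocycle2 +%R h) (h_sym : forall x y, h x y = h y x).
Hypothesis h_cont : contG2 h.
Hypothesis h_vanish : forall u u', vanish_on J u -> vanish_on J u' -> h u u' = 0.
Hypothesis h_trace : forall j, List.In j J -> cyc_trace q h (unitv j) = 0.

Let h00 : h 0 0 = 0. Proof. exact: h_vanish. Qed.
Local Notation mul := (ext_mul h).
Local Notation pow := (ext_pow h).

Lemma ext_pow_char j : List.In j J -> pow (unitv j) q = ext_one.
Proof. by move=> jJ; rewrite /ext_pow -/(cyc_trace q h _) h_trace // unitv_char. Qed.

Let mul1 := ext_mul1 h_cocycle h00.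
Let mulACA := ext_mulACA h_cocycle h_sym.
Let powD := ext_powD h_cocycle h_sym h00.

Lemma ext_pow_mod j n : List.In j J -> pow (unitv j) (n %% q)%N = pow (unitv j) n.
Proof.
move=> jJ; rewrite {2}(divn_eq n q) powD; elim: (n %/ q)%N => [|k IHk].
  by rewrite mul0n ext_pow0 mul1.
by rewrite mulSn powD ext_pow_char // mul1.
Qed.

Lemma ext_pow_addZp j (a b : R) : List.In j J ->
  pow (unitv j) (a + b)%R = mul (pow (unitv j) a) (pow (unitv j) b).
Proof.
move=> jJ; rewrite -powD -[in RHS]ext_pow_mod //; congr (pow _ _).
exact: (f_equal (fun m => (a + b) %% m)%N (Zp_cast q_gt1)).
Qed.

Fixpoint ext_section (L : seq I) (x : A) : R * A :=
  if L is j :: L' then mul (pow (unitv j) (x j)) (ext_section L' (cut j x))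
  else ext_one.

Lemma ext_section_snd L x : (ext_section L x).2 = proj L x.
Proof.
elim: L x => [|j L IHL] x /=; first by rewrite proj_nil.
by rewrite IHL proj_cons.
Qed.

Lemma ext_section_local L x y : agree_on L x y -> ext_section L x = ext_section L y.
Proof.
elim: L x y => [|j L IHL] x y //= xy.
by rewrite (xy j (or_introl erefl)) (IHL _ _ (agree_on_cut xy)).
Qed.

Lemma ext_sectionD L x y : List.incl L J ->
  ext_section L (x + y) = mul (ext_section L x) (ext_section L y).
Proof.
elim: L x y => [|j L IHL] x y /= jLJ; first by rewrite mul1.
have [jJ LJ] := List.incl_cons_inv jLJ.
by rewrite cutD IHL // ext_pow_addZp // mulACA.
Qed.

Definition ext_lift (x : A) : R * A := mul (ext_section J x) (0, x - proj J x).

Lemma ext_lift_snd x : (ext_lift x).2 = x.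
Proof. by rewrite /= ext_section_snd subrKC. Qed.

Lemma ext_liftD x y : ext_lift (x + y) = mul (ext_lift x) (ext_lift y).
Proof.
rewrite /ext_lift mulACA -ext_sectionD; last exact: List.incl_refl.
congr (mul _ _); rewrite /ext_mul /= h_vanish; try exact: vanish_on_subproj.
by rewrite !addr0 projD opprD addrACA.
Qed.

Lemma ext_lift_cont : contG1 (fun x => (ext_lift x).1).
Proof.
move=> x; have [K hK] := contG2_agree (proj J x) (x - proj J x) h_cont.
exists (J ++ K) => x' xx'.
have x'J := agree_on_catl xx'; have x'K := agree_on_catr xx'.
rewrite /= !ext_section_snd (ext_section_local x'J) (proj_agree x'J) hK //.
by move=> i iK; rewrite !addrfctE !opprfctE /= x'K.
Qed.

Lemma symmetric_cocycle_cobound :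
  exists b : A -> R, contG1 b /\ forall x y, h x y = b x + b y - b (x + y).
Proof.
exists (fun x => - (ext_lift x).1); split=> [x|x y].
  by have [K bK] := ext_lift_cont x; exists K => x' /bK ->.
rewrite ext_liftD; move: (ext_lift_snd x) (ext_lift_snd y).
by case: (ext_lift x) (ext_lift y) => [a x'] [b y'] /= -> ->; ring.
Qed.

End SymmetricCocycles.

Section CyclicElements.
Variables (I : Type) (q : nat).
Hypothesis q_gt1 : (1 < q)%N.
Local Notation R := 'Z_q.
Local Notation A := (I -> 'Z_q).

Lemma order_q_char (g : A) : order_q g -> g *+ q = 0.
Proof. by case; rewrite gscaleE. Qed.

Lemma order_q_unitv j : order_q (unitv j : A).
Proof.
split; first by rewrite gscaleE unitv_char.
move=> k /andP[k_gt0 k_ltq] /(congr1 (fun v => v j)).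
rewrite gscaleE natmulfctE /unitv /= asboolT // => /eqP.
by rewrite -(inj_eq val_inj) /= (val_Zp_nat q_gt1) modn_small // => /eqP k0; rewrite k0 in k_gt0.
Qed.

Lemma order_q_natr_inj (g : A) a b : order_q g -> g *+ a = g *+ b -> (a%:R : R) = b%:R.
Proof.
move=> g_ord; have [_ g_ne0] := g_ord.
have gmod n : g *+ (n %% q) = g *+ n.
  by rewrite {2}(divn_eq n q) mulrnDr mulnC mulrnA (order_q_char g_ord) mul0rn add0r.
have lt_ne m n : (m < n < q)%N -> g *+ m <> g *+ n.
  case/andP=> mn nq; rewrite -(subnKC (ltnW mn)) mulrnDr -{1}[g *+ m]addr0.
  move=> /addrI/esym; rewrite -gscaleE; apply: g_ne0.
  by rewrite subn_gt0 mn (leq_ltn_trans (leq_subr _ _)).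
rewrite -(Zp_nat_mod q_gt1 a) -(Zp_nat_mod q_gt1 b) -gmod -(gmod b) => gab.
have [aq bq] := (ltn_pmod a (ltnW q_gt1), ltn_pmod b (ltnW q_gt1)).
case: (ltngtP (a %% q) (b %% q)) => [ab|ba|-> //]; exfalso.
  by apply: (lt_ne _ _ _ gab); rewrite ab bq.
by apply: (lt_ne _ _ _ (esym gab)); rewrite ba aq.
Qed.

End CyclicElements.

Section Decomposability.
Variables (I : Type) (q : nat).
Hypothesis q_gt1 : (1 < q)%N.
Local Notation R := 'Z_q.
Local Notation A := (I -> 'Z_q).

Lemma res_cyc_zero_trace (g : A) F : order_q g -> res_cyc_zero g F -> cyc_trace q F g = 0.
Proof.
move=> g_ord [b bE]; rewrite (@cyc_trace_cobound _ _ _ _ _ b) ?order_q_char //.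
  by rewrite -mulr_natr pchar_Zp // mulr0.
by move=> a c; rewrite -!gscaleE.
Qed.

Definition diag_cups (kap : I -> R) (L : seq I) := cup_rec (fun j _ x => kap j * x j) L.

Lemma cups_on_diag_cups kap L : cups_on L (diag_cups kap L).
Proof.
apply: cups_on_cup_rec => j L'; split=> [x y|x y xy]; first exact: mulrDr.
by rewrite (xy j (or_introl erefl)).
Qed.

Lemma diag_cups_sym kap L x y : cup_sum (diag_cups kap L) x y = cup_sum (diag_cups kap L) y x.
Proof.
elim: L x y => [|j L IHL] x y; first by rewrite /cup_sum !big_nil.
by rewrite !cup_sum_rec_cons IHL; congr (_ + _); ring.
Qed.

Lemma diag_cups_unitv kap L j : List.In j L ->
  cup_sum (diag_cups kap L) (unitv j) (unitv j) = kap j.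
Proof.
elim: L => [|j' L IHL] //= jL; rewrite cup_sum_rec_cons.
case: (pselect (j' = j)) => [<-|j'j].
  rewrite cut_unitv biadditive0l ?addr0; last first.
    exact/cup_sum_biadditive/cups_on_additive/cups_on_diag_cups.
  by rewrite /unitv asboolT // !mulr1.
rewrite cut_unitv_neq // IHL; last by case: jL.
by rewrite /unitv asboolF ?mulr0 ?add0r // => /esym.
Qed.

Variable d : nat.
Hypothesis d_ann : forall t : R, t *+ d = 0 <-> exists k, t = k * 'C(q, 2)%:R.

Lemma symmetric_cocycle_decomposable (h : A -> A -> R) (J : seq I) :
  cocycle2 +%R h -> (forall x y, h x y = h y x) -> contG2 h ->
  (forall u u', vanish_on J u -> vanish_on J u' -> h u u' = 0) ->
  (forall j, cyc_trace q h (unitv j) *+ d = 0) -> decomposable h.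
Proof.
move=> hC hS hcont hJ htr.
pose kap j := sval (cid ((d_ann _).1 (htr j))).
have kapE j : cyc_trace q h (unitv j) = kap j * 'C(q, 2)%:R by rewrite /kap; case: cid.
have dsJ : cups_on J (diag_cups kap J) by apply: cups_on_diag_cups.
have dsB := cup_sum_biadditive (cups_on_additive dsJ).
have [|||||b [bC bE]] := @symmetric_cocycle_cobound _ _ q_gt1
  (fun x y => h x y - cup_sum (diag_cups kap J) x y) J.
- exact: cocycle2B hC (biadditive_cocycle2 dsB).
- by move=> x y; rewrite hS diag_cups_sym.
- exact: contG2B hcont (cup_sum_cont dsJ).
- by move=> u u' u0 u'0; rewrite hJ // (cup_sum_vanish _ dsJ u0) subrr.
- move=> j jJ; rewrite cyc_traceB [cyc_trace q (cup_sum _) _]cyc_trace_biadditive //.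
  by rewrite diag_cups_unitv // kapE mulr_natr subrr.
apply: decomposable_eq (decomposableD (decomposable_cobound bC) (decomposable_cups dsJ)).
by move=> x y; rewrite -bE subrK.
Qed.

Lemma decomposable_of_res_cyc_zero (f : A -> A -> R) : contG2 f -> cocycle2 +%R f ->
  (forall g : A, order_q g -> res_cyc_zero g (fun x y => f x y *+ d)) -> decomposable f.
Proof.
move=> fC f_cocycle f_res.
have [L [cs [csL csS]]] := symmetrizing_cups fC f_cocycle.
have csB := cup_sum_biadditive (cups_on_additive csL).
have [J fJ] := contG2_agree 0 0 fC.
pose h x y := f x y - cup_sum cs x y - f 0 0.
apply: (@decomposable_eq _ _ _ (fun x y => h x y + (cup_sum cs x y + f 0 0))).
  by move=> x y; rewrite /h; ring.
apply: decomposableD; last exact: decomposableD (decomposable_cups csL) (decomposable_const _).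
apply: (symmetric_cocycle_decomposable (J := J ++ L)).
- exact/cocycle2B/cocycle2_const/cocycle2B/biadditive_cocycle2.
- by move=> x y; rewrite /h -csS.
- apply: contG2B; first exact: contG2B fC (cup_sum_cont csL).
  by move=> x y; exists [::].
- move=> u u' u0 u'0; rewrite /h (cup_sum_vanish _ csL (vanish_on_catr u0)).
  by rewrite (fJ u u' (vanish_on_catl u0) (vanish_on_catl u'0)) subr0 subrr.
move=> j; have Cd : 'C(q, 2)%:R *+ d = 0 :> R by apply/d_ann; exists 1; rewrite mul1r.
have fq : f 0 0 *+ q = 0 by rewrite -mulr_natr pchar_Zp // mulr0.
have uj := order_q_unitv q_gt1 j.
have ftr : cyc_trace q f (unitv j) *+ d = 0.
  by rewrite /cyc_trace -sumrMnl; apply: res_cyc_zero_trace uj (f_res _ uj).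
rewrite !cyc_traceB cyc_trace_const [cyc_trace q (cup_sum _) _]cyc_trace_biadditive //.
by rewrite fq subr0 mulrnBl ftr -mulrnA -mulr_natr natrM mulr_natr Cd mulr0 subr0.
Qed.

Lemma res_cyc_zero_of_decomposable (h2 : R) (f : A -> A -> R) :
  h2 *+ 2 = d%:R -> decomposable f ->
  forall g : A, order_q g -> res_cyc_zero g (fun x y => f x y *+ d).
Proof.
move=> h2E [cs [b [csH _ fE]]] g g_ord.
have csB : biadditive (cup_sum cs).
  by apply: cup_sum_biadditive => c /csH[[_ c1D] [_ c2D]].
pose u := cup_sum cs g g.
have f_mul a c : f (g *+ a) (g *+ c) =
    u * (a * c)%:R + (b (g *+ a) + b (g *+ c) - b (g *+ (a + c))).
  rewrite fE -/(cup_sum cs _ _) (biadditiveMnl csB g (g *+ c) a) (biadditiveMnr csB g g c).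
  by rewrite -mulrnA mulnC mulr_natr gaddE -mulrnDr.
(* [k y] is a discrete logarithm of [y] in base [g]. *)
pose k (y : A) : nat := if pselect (exists a, y = g *+ a) is left e then sval (cid e) else 0.
have kE n : ((k (g *+ n))%:R : R) = n%:R.
  rewrite /k; case: pselect => [e|[]]; last by exists n.
  by case: (cid e) => a' /= /esym/(order_q_natr_inj q_gt1 g_ord).
exists (fun y => b y *+ d - u * h2 * (k y)%:R ^+ 2) => a c.
have Ed x : x *+ d = x * (h2 + h2) by rewrite -mulr2n h2E mulr_natr.
by rewrite !gscaleE f_mul !kE natrD natrM !Ed; ring.
Qed.

Theorem decomposable_iff_res_cyc_zero (h2 : R) (f : A -> A -> R) :
  h2 *+ 2 = d%:R -> contG2 f -> cocycle2 +%R f ->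
  (forall g : A, order_q g -> res_cyc_zero g (fun x y => f x y *+ d)) <-> decomposable f.
Proof.
move=> h2E fC f_cocycle.
split; first exact: decomposable_of_res_cyc_zero fC f_cocycle.
exact: res_cyc_zero_of_decomposable h2E.
Qed.

End Decomposability.

Section BinomialModq.
Variable q : nat.
Hypothesis q_gt1 : (1 < q)%N.
Local Notation R := 'Z_q.

Lemma bin2_Zp_odd : odd q -> ('C(q, 2)%:R : R) = 0.
Proof. by move=> q_odd; rewrite bin2odd // natrM pchar_Zp // mul0r. Qed.

Variable m : nat.
Hypotheses (q_double : q = m.*2) (m_gt0 : (0 < m)%N).

Lemma bin2_Zp_double : ('C(q, 2)%:R : R) = m%:R.
Proof.
have mm : (m%:R + m%:R : R) = 0 by rewrite -natrD addnn -q_double pchar_Zp.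
rewrite bin2 (_ : q * q.-1 = (m * q.-1).*2)%N; last by rewrite {1}q_double -!muln2 mulnAC.
rewrite doubleK natrM -subn1 natrB ?(ltnW q_gt1) // pchar_Zp // sub0r mulrN1.
by apply/eqP; rewrite -subr_eq0 -opprD mm oppr0.
Qed.

Lemma Zp_double_ann (t : R) : t *+ 2 = 0 <-> exists k, t = k * m%:R.
Proof.
split=> [t2|[k ->]]; last by rewrite -mulrnAr mulr2n -natrD addnn -q_double pchar_Zp // mulr0.
have : (m * 2 %| t * 2)%N.
  by rewrite muln2 -q_double /dvdn -(val_Zp_nat q_gt1) natrM natr_Zp mulr_natr t2.
by rewrite dvdn_pmul2r // => /dvdnP[k tk]; exists k%:R; rewrite -natrM -tk natr_Zp.
Qed.

End BinomialModq.

Section Delta.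
Variables (p s : nat).
Hypotheses (p_prime : prime p) (s_gt0 : (0 < s)%N).
Local Notation q := (p ^ s)%N.

Lemma prime_power_gt1 : (1 < q)%N.
Proof. by rewrite -(exp1n s) ltn_exp2r -?lt0n // prime_gt1. Qed.

Lemma prime_power_odd : (p != 2)%N -> odd q.
Proof.
by move/eqP=> p_ne2; rewrite oddX; case: (even_prime p_prime) => [/p_ne2|->] //; rewrite orbT.
Qed.

Lemma delta_half : exists h2 : 'Z_q, h2 *+ 2 = (delta p)%:R.
Proof.
rewrite /delta; case: eqP => [_|/eqP/prime_power_odd q_odd]; first by exists 1.
exists (q.+1./2)%:R; rewrite mulr2n -natrD addnn.
have := odd_double_half q.+1; rewrite oddS q_odd add0n => ->.
by rewrite mulrSr pchar_Zp ?add0r // prime_power_gt1.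
Qed.

Lemma delta_ann (t : 'Z_q) : t *+ delta p = 0 <-> exists k, t = k * 'C(q, 2)%:R.
Proof.
have q_gt1 := prime_power_gt1; rewrite /delta; case: eqP => [p2|/eqP/prime_power_odd q_odd].
  have q_double : q = (2 ^ s.-1).*2 by rewrite p2 -mul2n -expnS prednK.
  by rewrite (bin2_Zp_double q_gt1 q_double) ?expn_gt0 //; apply: Zp_double_ann.
rewrite bin2_Zp_odd // mulr1n; split=> [->|[k ->]]; last exact: mulr0.
by exists 0; rewrite mul0r.
Qed.

End Delta.

(* The hypotheses on the profinite group [S] only serve to identify its
   quotient [S^[2]] with (Z/q)^I through [pi]; the statement itself only
   concerns the cohomology of (Z/q)^I. *)
Theorem corollary10p7 (p s : nat) (T : topologicalType)
    (mul : T -> T -> T) (inv : T -> T) (one : T)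
    (I : Type) (pi : T -> I -> 'Z_(p ^ s)) :
  prime p -> (0 < s)%N ->
  is_profinite_group mul inv one ->
  H2_vanishes mul (p ^ s) ->
  S2_quotient_map mul inv one pi ->
  forall f : (I -> 'Z_(p ^ s)) -> (I -> 'Z_(p ^ s)) -> 'Z_(p ^ s),
    contG2 f -> cocycle2 (@gadd I (p ^ s)) f ->
    ((forall g : I -> 'Z_(p ^ s), order_q g ->
        res_cyc_zero g (fun x y => f x y *+ delta p))
     <-> decomposable f).
Proof.
move=> p_prime s_gt0 _ _ _ f fC f_cocycle.
have [h2 h2E] := delta_half p_prime s_gt0.
exact: (decomposable_iff_res_cyc_zero (prime_power_gt1 p_prime s_gt0)
  (delta_ann p_prime s_gt0) h2E fC f_cocycle).
Qed.
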